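(* Let $\Gamma$ be a routing game, $\mathbf{x}$ a flow in $\Gamma$, and $\mathbf{y},\mathbf{y}'\in\mathbb{R}^E$ congestion vectors with $\|\mathbf{y}-\mathbf{y}'\|_\infty\le b$. Then for any $\zeta>0$, every player who is $\zeta$-satisfied in $\mathbf{x}$ with respect to $\mathbf{y}$ is also $\zeta'$-satisfied with respect to $\mathbf{y}'$, where $$\zeta'=\zeta+2m\gamma b.$$
   Context: Routing game $\Gamma$: directed graph $G=(V,E)$, $m=|E|$, $n$ players with demands $s_i=(s_i^1,s_i^2)$, edge latency functions $L_e$ that are $\gamma$-Lipschitz (e.g. $L_e(y)=\ell_e(y)+\tau_e$ with $\ell_e$ non-decreasing, convex, twice differentiable, $\ell_e(n)\le n$, $\gamma$-Lipschitz, and $\tau_e$ constant). $\mathcal{F}(s_i)\subseteq\{0,1\}^m$ integral unit $s_i^1$-to-$s_i^2$ flows. For congestion $\mathbf{y}$, $c_{\mathbf{x}_i}(\mathbf{y})=\sum_ex_{i,e}L_e(y_e)$; player $i$ with flow $\mathbf{x}_i$ is $\rho$-unsatisfied w.r.t. $\mathbf{y}$ if some $\mathbf{x}_i'\in\mathcal{F}(s_i)$ has $c_{\mathbf{x}_i'}(\mathbf{y}-\mathbf{x}_i+\mathbf{x}_i')\le c_{\mathbf{x}_i}(\mathbf{y})-\rho$, and $\rho$-satisfied otherwise. *)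

From HB Require Import structures.
From mathcomp Require Import all_boot all_order all_algebra.
From mathcomp Require Import reals.
Set Implicit Arguments. Unset Strict Implicit. Unset Printing Implicit Defensive.
Import Order.TTheory GRing.Theory Num.Theory.
Local Open Scope ring_scope.

Section Routing.
Variables (R : realType) (V E : finType) (src tgt : E -> V).

(* x ∈ F(s1,s2): an integral ({0,1}-valued) unit s1-to-s2 flow in the directed
   graph with edge set E, edge e going from src e to tgt e. *)
Definition unit_flow (s1 s2 : V) (x : E -> R) : Prop :=
  (forall e, x e = 0 \/ x e = 1) /\
  (forall v : V,
     \sum_(e | src e == v) x e - \sum_(e | tgt e == v) x e
       = (v == s1)%:R - (v == s2)%:R).

Definition path_cost (L : E -> R -> R) (x y : E -> R) : R :=
  \sum_e x e * L e (y e).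

Definition unsatisfied (L : E -> R -> R) (s1 s2 : V) (rho : R)
    (x y : E -> R) : Prop :=
  exists x' : E -> R, unit_flow s1 s2 x' /\
    path_cost L x' (fun e => y e - x e + x' e) <= path_cost L x y - rho.

Definition satisfied L s1 s2 rho x y : Prop := ~ unsatisfied L s1 s2 rho x y.

Definition linf_norm (y : E -> R) : R := \big[Num.max/0]_e `|y e|.

Definition lipschitz (gamma : R) (f : R -> R) : Prop :=
  forall a b, `|f a - f b| <= gamma * `|a - b|.

End Routing.

From HB Require Import structures.
From mathcomp Require Import all_boot all_order all_algebra.
From mathcomp Require Import reals.
From mathcomp Require Import lra.
Import Order.TTheory GRing.Theory Num.Theory.
Local Open Scope ring_scope.

(* A deviation x' that gains [zeta + 2 m gamma b] against y' gains at least
   [zeta] against y: moving the congestion by at most b on every edge changes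
   the cost of any 0/1 flow by at most m gamma b, and this is paid twice, once
   for the current flow and once for the deviation. *)

Lemma linf_norm_ge {R : realType} {E : finType} (f : E -> R) (e : E) :
  `|f e| <= linf_norm f.
Proof. by rewrite /linf_norm (bigD1 e) //= le_max lexx. Qed.

Lemma lipschitz_ge0 {R : realType} {gamma : R} {f : R -> R} :
  lipschitz gamma f -> 0 <= gamma.
Proof.
by move=> /(_ 1 0); rewrite subr0 normr1 mulr1; apply: le_trans.
Qed.

Lemma path_cost_lipschitz {R : realType} {E : finType} {L : E -> R -> R}
    {gamma b : R} {z : E -> R} (u u' : E -> R) :
  (forall e, lipschitz gamma (L e)) ->
  (forall e, z e = 0 \/ z e = 1) ->
  (forall e, `|u e - u' e| <= b) ->
  `|path_cost L z u - path_cost L z u'| <= #|E|%:R * gamma * b.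
Proof.
move=> HL Hz Hu; rewrite /path_cost -sumrB.
have -> : #|E|%:R * gamma * b = \sum_(e : E) gamma * b.
  by rewrite sumr_const -mulrA mulr_natl.
apply: le_trans (ler_norm_sum _ _ _) (ler_sum _ _) => e _.
have gamma_ge0 := lipschitz_ge0 (HL e).
have b_ge0 : 0 <= b := le_trans (normr_ge0 _) (Hu e).
rewrite -mulrBr normrM.
case: (Hz e) => ->; rewrite ?normr0 ?mul0r ?normr1 ?mul1r ?mulr_ge0 //.
by apply: le_trans (HL e _ _) _; rewrite ler_wpM2l.
Qed.

Theorem lemmaB4 (R : realType) (V E : finType) (src tgt : E -> V)
    (n : nat) (s : 'I_n -> V * V) (L : E -> R -> R) (gamma : R)
    (HL : forall e, lipschitz gamma (L e))
    (x : 'I_n -> E -> R)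
    (Hx : forall i, unit_flow src tgt (s i).1 (s i).2 (x i))
    (y y' : E -> R) (b : R)
    (Hyy : linf_norm (fun e => y e - y' e) <= b)
    (zeta : R) (Hzeta : 0 < zeta) (i : 'I_n) :
  satisfied src tgt L (s i).1 (s i).2 zeta (x i) y ->
  satisfied src tgt L (s i).1 (s i).2
    (zeta + 2 * #|E|%:R * gamma * b) (x i) y'.
Proof.
move=> sat [x' [flow_x' gain']]; apply: sat; exists x'; split => //.
have dist_yy' e : `|y e - y' e| <= b.
  exact: le_trans (linf_norm_ge (fun e => y e - y' e) e) Hyy.
have dist_shifted e :
    `|(y e - x i e + x' e) - (y' e - x i e + x' e)| <= b.
  by rewrite opprD addrACA subrr addr0 opprD addrACA subrr addr0.
have /ler_normlP [_ dev_hi] :=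
  path_cost_lipschitz (fun e => y e - x i e + x' e)
    (fun e => y' e - x i e + x' e) HL flow_x'.1 dist_shifted.
have /ler_normlP [cur_lo _] :=
  path_cost_lipschitz y y' HL (Hx i).1 dist_yy'.
(* lra treats [2 * m * gamma * b] as atomic unless reassociated to [2 * K]. *)
move: gain' dev_hi cur_lo; rewrite -!mulrA => *.
lra.
Qed.
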